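(* If $n\ge3$ and $L$ is a left ideal or a suffix-closed language with $n$ quotients, then $\sigma(L)\le n^{n-1}+n-1$.
   Context: A left ideal is a nonempty $L\subseteq\Sigma^*$ with $L=\Sigma^*L$; $L$ is suffix-closed if $w\in L$ implies every suffix of $w$ is in $L$. The quotients of $L$ are $w^{-1}L=\{x: wx\in L\}$. $\sigma(L)$ is the cardinality of the syntactic semigroup $\Sigma^+/\approx_L$, where $x\approx_L y$ iff $uxv\in L\Leftrightarrow uyv\in L$ for all $u,v$ (equivalently, the size of the transition semigroup of the minimal DFA of $L$). *)

From mathcomp Require Import all_boot.
Set Implicit Arguments. Unset Strict Implicit. Unset Printing Implicit Defensive.

Definition lang (T : finType) := seq T -> Prop.

Definition left_ideal (T : finType) (L : lang T) : Prop :=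
  (exists w, L w) /\ (forall u w, L w -> L (u ++ w)).

Definition suffix_closed (T : finType) (L : lang T) : Prop :=
  forall u w, L (u ++ w) -> L w.

Definition quotient (T : finType) (L : lang T) (w : seq T) : lang T :=
  fun x => L (w ++ x).

Definition same_lang (T : finType) (L1 L2 : lang T) : Prop :=
  forall x, L1 x <-> L2 x.

Definition has_n_quotients (T : finType) (L : lang T) (n : nat) : Prop :=
  exists ws : seq (seq T),
    size ws = n /\
    (forall i j, i < n -> j < n ->
        same_lang (quotient L (nth [::] ws i)) (quotient L (nth [::] ws j)) -> i = j) /\
    (forall w, exists2 i, i < n & same_lang (quotient L w) (quotient L (nth [::] ws i))).

Definition synt_eq (T : finType) (L : lang T) (x y : seq T) : Prop :=
  forall u v, L (u ++ x ++ v) <-> L (u ++ y ++ v).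

(* sigma(L) <= N : the syntactic semigroup Sigma^+ / ~_L has at most N classes,
   i.e. at most N nonempty words represent all classes of nonempty words. *)
Definition synt_semigroup_size_le (T : finType) (L : lang T) (N : nat) : Prop :=
  exists reps : seq (seq T),
    size reps <= N /\ all (fun r => r != [::]) reps /\
    (forall x : seq T, x != [::] -> exists2 r, r \in reps & synt_eq L x r).

From mathcomp Require Import all_boot zify boolp.
Set Implicit Arguments. Unset Strict Implicit. Unset Printing Implicit Defensive.

(** The quotients of [L] are the states of its minimal automaton, and the
    syntactic semigroup acts faithfully on them by the transformations of the
    nonempty words.  Ordered by inclusion, the quotients form a poset with
    least element [L] when [L] is a left ideal (every quotient contains [L])
    and greatest element [L] when [L] is suffix-closed, and every
    transformation is monotone.  So it suffices to count the monotone
    self-maps [f] of an [n]-element poset with least element [z].  If the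
    elements other than [z] form an antichain, [f] either fixes [z]
    ([n^(n-1)] maps) or is constant with value [f z <> z] ([n-1] maps).
    Otherwise fix [a < b] both different from [z]: the maps with [f z = p],
    values above [p] and [f a <= f b] number at most [k^(n-2)(k+1)/2] for
    [k = |up p|]; sorted by size, the [|up p|] with [p <> z] are dominated by
    [1, ..., n-1], and an elementary estimate of [sum k^(n-2)(k+1)] finishes. *)

Definition pinned_bound (n k : nat) := k ^ (n - 2) * k.+1.

Lemma expSn_ge_binomial2 e k :
  2 * k ^ e.+2 + 2 * e.+2 * k ^ e.+1 + e.+2 * e.+1 * k ^ e <= 2 * k.+1 ^ e.+2.
Proof.
elim: e => [|e IH]; first by rewrite !expnS expn0; nia.
move: IH; rewrite !expnS; set Z := k ^ e; set Y := k.+1 ^ e; nia.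
Qed.

Lemma pinned_bound_step e k : 1 <= k <= e.+1 ->
  3 * pinned_bound e.+3 k + 2 * k ^ e.+2 <= 2 * k.+1 ^ e.+2.
Proof.
move=> /andP[k_gt0 k_le]; rewrite /pinned_bound subn2 /=.
have := expSn_ge_binomial2 e k; rewrite !expnS; set Z := k ^ e.
have : (3 * k * k + k) * Z <= (2 * e.+1 * k + e.+1 * e.+1 + e.+1) * Z.
  by apply: leq_mul => //; nia.
nia.
Qed.

Lemma sum_pinned_bound_le e j : j <= e.+1 ->
  3 * \sum_(1 <= k < j.+1) pinned_bound e.+3 k + 2 <= 2 * j.+1 ^ e.+2.
Proof.
elim: j => [|j IH] j_le; first by rewrite big_geq // exp1n.
rewrite big_nat_recr //= mulnDr -addnAC.
have := IH (ltnW j_le); have := @pinned_bound_step e j.+1 j_le; lia.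
Qed.

Lemma pinned_bound_total_le n : 3 <= n ->
  pinned_bound n n + \sum_(1 <= k < n) pinned_bound n k <= 2 * (n ^ n.-1 + n - 1).
Proof.
case: n => [|[|[|[|[|m]]]]] // _; try by rewrite /pinned_bound unlock; vm_compute.
rewrite big_nat_recr //=.
have := @sum_pinned_bound_le m.+2 m.+3 (leqnn _).
have := expSn_ge_binomial2 m.+1 m.+4.
rewrite /pinned_bound subn2 /= !expnS.
set S := \sum_(1 <= k < m.+4) _.
move: S (m.+4.+1 ^ m.+1) (m.+4 ^ m.+1) => S A W.
nia.
Qed.

Lemma pinned_bound_homo n : {homo pinned_bound n : i j / i <= j}.
Proof.
move=> i j le_ij; rewrite leq_mul //.
by case: (n - 2) => [|e]; rewrite ?expn0 ?leq_exp2r.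
Qed.

Lemma leq_card_bigcup (I T : finType) (P : {pred I}) (F : I -> {set T}) :
  #|\bigcup_(i in P) F i| <= \sum_(i in P) #|F i|.
Proof.
elim/big_ind2: _ => [|k1 A1 k2 A2 le1 le2|//]; first by rewrite cards0.
by apply: leq_trans (leq_card_setU A1 A2) _; apply: leq_add.
Qed.

Section MonotoneMaps.
Variables (Q : finType) (le : rel Q) (z : Q).
Hypotheses (le_refl : reflexive le) (le_anti : antisymmetric le)
  (le_trans : transitive le) (le_z : forall x, le z x).

Definition upset p := [set x | le p x].

Definition monotone_maps :=
  [set f : {ffun Q -> Q} | [forall x, forall y, le x y ==> le (f x) (f y)]].

Lemma card_upset_z : #|upset z| = #|Q|.
Proof.
apply/eqP; rewrite eqn_leq max_card subset_leq_card //.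
by apply/subsetP => x _; rewrite inE.
Qed.

Lemma card_upset_lt p q : le p q -> p != q -> #|upset q| < #|upset p|.
Proof.
move=> le_pq neq_pq; apply/proper_card/properP; split.
  by apply/subsetP => x; rewrite !inE; apply: le_trans.
exists p; rewrite !inE ?le_refl //; apply: contra neq_pq => le_qp.
by apply/eqP/le_anti; rewrite le_pq.
Qed.

Definition ordered_pairs p := [set u : Q * Q | [&& le p u.1, le p u.2 & le u.1 u.2]].

Lemma card_ordered_pairs p : 2 * #|ordered_pairs p| <= #|upset p| * (#|upset p|).+1.
Proof.
rewrite /ordered_pairs; set C := [set u : Q * Q | _].
pose swap (u : Q * Q) := (u.2, u.1).
have swap_inj : injective swap by move=> [x1 y1] [x2 y2] [-> ->].
have sub_sq : C :|: swap @: C \subset setX (upset p) (upset p).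
  apply/subsetP => -[x y]; rewrite !inE => /orP[|/imsetP[[x' y'] + [-> ->]]].
    by case/and3P=> -> ->.
  by rewrite !inE => /and3P[-> ->].
have sub_diag : C :&: swap @: C \subset [set (x, x) | x in upset p].
  apply/subsetP => -[x y]; rewrite !inE => /andP[Cxy /imsetP[[y' x'] Cyx [Ex Ey]]].
  move: Cyx; rewrite -{}Ex -{}Ey !inE /= => /and3P[_ _ le_yx].
  case/and3P: Cxy => /= le_px _ le_xy.
  have -> : y = x by apply: le_anti; rewrite le_yx le_xy.
  by apply: imset_f; rewrite inE.
have := cardsUI C (swap @: C); rewrite card_imset //.
have := subset_leq_card sub_sq; rewrite cardsX.
have := leq_trans (subset_leq_card sub_diag) (leq_imset_card _ _).
lia.
Qed.

Definition pinned_maps p a b :=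
  [set f : {ffun Q -> Q} | [&& f z == p, [forall x, le p (f x)] & le (f a) (f b)]].

Lemma card_pinned_maps_le p a b : a != z -> b != z -> a != b ->
  2 * #|pinned_maps p a b| <= pinned_bound #|Q| #|upset p|.
Proof.
move=> az bz ab; set G := pinned_maps p a b; set C := ordered_pairs p.
set D := ~: (z |: [set a; b]).
set H := [set g in pffun_on p D (upset p)].
pose restrict (f : {ffun Q -> Q}) := ((f a, f b), [ffun x => if x \in D then f x else p]).
have card_zab : #|z |: [set a; b]| = 3.
  by rewrite cardsU1 cards2 !inE negb_or ab eq_sym az eq_sym bz.
have card_D : #|D| = #|Q| - 3 by rewrite cardsCs setCK card_zab.
have Q_ge3 : 3 <= #|Q| by rewrite -card_zab max_card.
have restrict_inj : {in G &, injective restrict}.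
  move=> f g; rewrite !inE => /and3P[/eqP fz _ _] /and3P[/eqP gz _ _] [fa fb fg].
  apply/ffunP => x; have := congr1 (fun h : {ffun Q -> Q} => h x) fg; rewrite !ffunE.
  by case: ifP => //; rewrite !inE => /negbFE/or3P[] /eqP ->; rewrite ?fz ?gz.
have restrict_sub : restrict @: G \subset setX C H.
  apply/subsetP => _ /imsetP[f + ->]; rewrite inE => /and3P[_ /forallP le_pf le_fab].
  rewrite !inE /= !le_pf le_fab; apply/pffun_onP; split.
    by apply/subsetP => x; rewrite inE ffunE; case: ifP; rewrite ?eqxx.
  by move=> _ /imageP[x xD ->]; rewrite ffunE xD inE le_pf.
have := subset_leq_card restrict_sub; rewrite card_in_imset // cardsX.
rewrite [#|H|]cardsE card_pffun_on card_D /pinned_bound.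
have -> : #|Q| - 2 = (#|Q| - 3).+1 by lia.
have := card_ordered_pairs p; rewrite -/C expnS.
move: #|upset p| #|C| #|G| (#|upset p| ^ (#|Q| - 3)) => k c g kD le_c le_g.
nia.
Qed.

Lemma sum_upset_le (g : nat -> nat) : {homo g : i j / i <= j} ->
  forall k (S : {set Q}), z \notin S -> #|S| = k ->
  \sum_(p in S) g #|upset p| <= \sum_(#|Q| - k <= i < #|Q|) g i.
Proof.
move=> g_homo; elim=> [|k IH] S zS card_S.
  by rewrite (cards0_eq card_S) big_set0.
have [p0 p0S] : {p0 | p0 \in S} by apply/sigW/set0Pn; rewrite -card_gt0 card_S.
have [p pS p_min] := arg_minnP (fun p => #|upset p|) p0S.
have {}pS : p \in S := pS.
have card_Sp : #|S :\ p| = k by move: (cardsD1 p S); rewrite pS card_S => -[].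
have disj : [disjoint upset p & z |: (S :\ p)].
  rewrite disjoint_subset; apply/subsetP => x; rewrite !inE negb_or => le_px.
  apply/andP; split.
    apply: contraNneq zS => xz; suff <- : p = z by [].
    by apply: le_anti; rewrite le_z -xz le_px.
  apply/negP => /andP[xp xS].
  by have := p_min x xS; rewrite leqNgt card_upset_lt // eq_sym.
have card_up : #|upset p| <= #|Q| - k.+1.
  have [_] := leq_card_setU (upset p) (z |: (S :\ p)); rewrite disj => /eqP.
  rewrite cardsU1 !inE negb_and zS orbT card_Sp => card_U.
  by have := max_card (upset p :|: (z |: (S :\ p))); rewrite card_U; lia.
have kQ : k.+1 < #|Q| by have := max_card (z |: S); rewrite cardsU1 zS card_S.
rewrite (big_setD1 p pS) big_ltn; last by lia.
have -> : (#|Q| - k.+1).+1 = #|Q| - k by lia.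
by rewrite leq_add ?g_homo ?IH // !inE negb_and zS orbT.
Qed.

Lemma card_monotone_maps_comparable a b : a != z -> b != z -> a != b -> le a b ->
  2 * #|monotone_maps|
    <= pinned_bound #|Q| #|Q| + \sum_(1 <= i < #|Q|) pinned_bound #|Q| i.
Proof.
move=> az bz ab le_ab.
have sub_G : monotone_maps \subset \bigcup_(p in predT) pinned_maps p a b.
  apply/subsetP => f; rewrite inE => /forallP f_mono; apply/bigcupP; exists (f z) => //.
  rewrite inE eqxx (implyP (forallP (f_mono a) b) le_ab) andbT.
  by apply/forallP => x; apply: (implyP (forallP (f_mono z) x)).
have := leq_trans (subset_leq_card sub_G) (leq_card_bigcup _ _).
rewrite -(leq_pmul2l (isT : 0 < 2)) => /leq_trans; apply.
apply: leq_trans (_ : _ <= \sum_(p in predT) pinned_bound #|Q| #|upset p|) _.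
  by rewrite big_distrr leq_sum // => p _; apply: card_pinned_maps_le.
rewrite (bigD1 z) //= card_upset_z leq_add2l.
rewrite (eq_bigl (mem [set~ z])) => [|x]; last by rewrite !inE.
have Q_gt0 : 0 < #|Q| by apply/card_gt0P; exists z.
have := sum_upset_le (@pinned_bound_homo #|Q|) (S := [set~ z]).
rewrite !inE eqxx cardsC1 => /(_ _ isT erefl).
by rewrite (_ : #|Q| - #|Q|.-1 = 1) //; lia.
Qed.

Lemma card_monotone_maps_antichain :
    (forall a b, a != z -> b != z -> le a b -> a = b) ->
  #|monotone_maps| <= #|Q| ^ #|Q|.-1 + #|Q| - 1.
Proof.
move=> antichain.
pose A := [set f in pffun_on z [set~ z] [set: Q]].
pose B := [set ([ffun=> p] : {ffun Q -> Q}) | p in [set~ z]].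
have sub_AB : monotone_maps \subset A :|: B.
  apply/subsetP => f; rewrite inE => /forallP f_mono.
  have [fz|fz] := eqVneq (f z) z.
    rewrite inE; apply/orP; left; rewrite inE.
    apply/pffun_onP; split; last by move=> y; rewrite inE.
    by apply/subsetP => x; rewrite !inE; apply: contra_neq => ->.
  rewrite inE; apply/orP; right; apply/imsetP; exists (f z); first by rewrite !inE.
  apply/ffunP => x; rewrite ffunE.
  have le_fzx : le (f z) (f x) := implyP (forallP (f_mono z) x) (le_z x).
  apply/esym/antichain => //; apply: contraNneq fz => fxz.
  by apply/eqP/le_anti; rewrite -{2}fxz le_fzx le_z.
apply: leq_trans (subset_leq_card sub_AB) _; apply: leq_trans (leq_card_setU A B) _.
have card_A : #|A| = #|Q| ^ #|Q|.-1 by rewrite cardsE card_pffun_on cardsT cardsC1.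
have card_B : #|B| <= #|Q|.-1 by rewrite -(cardsC1 z) leq_imset_card.
have Q_gt0 : 0 < #|Q| by apply/card_gt0P; exists z.
lia.
Qed.

Lemma card_monotone_maps : 3 <= #|Q| ->
  #|monotone_maps| <= #|Q| ^ #|Q|.-1 + #|Q| - 1.
Proof.
move=> Q_ge3.
have [[a [b /and4P[az bz ab le_ab]]]|antichain] :=
  pselect (exists a b, [&& a != z, b != z, a != b & le a b]).
  have := card_monotone_maps_comparable az bz ab le_ab.
  have := pinned_bound_total_le Q_ge3; lia.
apply: card_monotone_maps_antichain => a b az bz le_ab.
have [//|ab] := eqVneq a b; case: antichain; exists a, b; by rewrite az bz ab le_ab.
Qed.
End MonotoneMaps.

Lemma exists_witness_seq (A B : eqType) (P : A -> B -> Prop) (s : seq A) :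
    (forall a, a \in s -> exists b, P a b) ->
  exists bs : seq B, size bs = size s /\ forall a, a \in s -> exists2 b, b \in bs & P a b.
Proof.
elim: s => [|a s IH] witness; first by exists [::].
have [b Pab] := witness a (mem_head a s).
have [|bs [size_bs cover]] := IH.
  by move=> a' a's; apply: witness; rewrite inE a's orbT.
exists (b :: bs); split=> [|a']; first by rewrite /= size_bs.
rewrite inE => /predU1P[->|/cover[b' b'bs Pab']]; first by exists b; rewrite ?mem_head.
by exists b'; rewrite // inE b'bs orbT.
Qed.

Section QuotientStates.
Variables (T : finType) (L : lang T) (n : nat) (ws : seq (seq T)).
Hypotheses (n_gt0 : 0 < n)
  (ws_inj : forall i j, i < n -> j < n ->
     same_lang (quotient L (nth [::] ws i)) (quotient L (nth [::] ws j)) -> i = j)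
  (ws_cover : forall w,
     exists2 i, i < n & same_lang (quotient L w) (quotient L (nth [::] ws i))).

Definition state (i : 'I_n) : lang T := quotient L (nth [::] ws i).

Definition state_of (w : seq T) : 'I_n :=
  odflt (Ordinal n_gt0) [pick i | `[< same_lang (quotient L w) (state i) >]].

Lemma state_ofP w : same_lang (quotient L w) (state (state_of w)).
Proof.
rewrite /state_of; case: pickP => [i /asboolP //|none].
have [i lt_in Hi] := ws_cover w.
by have /asboolP[] := none (Ordinal lt_in).
Qed.

Lemma state_inj i j : same_lang (state i) (state j) -> i = j.
Proof. by move=> eq_ij; apply/val_inj/(ws_inj (ltn_ord i) (ltn_ord j)). Qed.

Lemma state_of_nil w : state (state_of [::]) w <-> L w.
Proof. exact: iff_sym (state_ofP [::] w). Qed.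

Definition action (x : seq T) : {ffun 'I_n -> 'I_n} :=
  [ffun i : 'I_n => state_of (nth [::] ws i ++ x)].

Lemma state_action x i w : state (action x i) w <-> state i (x ++ w).
Proof. rewrite ffunE /state /quotient catA; exact: iff_sym (state_ofP _ w). Qed.

Lemma action_synt_eq x y : action x = action y -> synt_eq L x y.
Proof.
move=> eq_xy u v.
have via_action y' : L (u ++ y' ++ v) <-> state (action y' (state_of u)) v.
  exact: iff_trans (state_ofP u _) (iff_sym (state_action _ _ _)).
by split=> /via_action; [rewrite eq_xy | rewrite -eq_xy] => /via_action.
Qed.

Definition state_sub (i j : 'I_n) : bool := `[< forall w, state i w -> state j w >].

Lemma state_sub_refl : reflexive state_sub.
Proof. by move=> i; apply/asboolP. Qed.

Lemma state_sub_anti : antisymmetric state_sub.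
Proof.
move=> i j /andP[/asboolP sub_ij /asboolP sub_ji].
by apply: state_inj => w; split; [apply: sub_ij | apply: sub_ji].
Qed.

Lemma state_sub_trans : transitive state_sub.
Proof.
by move=> j i k /asboolP sub_ij /asboolP sub_jk; apply/asboolP => w /sub_ij/sub_jk.
Qed.

Lemma state_sub_action x : {homo action x : i j / state_sub i j}.
Proof.
by move=> i j /asboolP sub_ij; apply/asboolP => w /state_action/sub_ij/state_action.
Qed.

Lemma synt_semigroup_size_le_monotone (le : rel 'I_n) :
    reflexive le -> antisymmetric le -> transitive le ->
    (forall i, le (state_of [::]) i) -> (forall x, {homo action x : i j / le i j}) ->
  3 <= n -> synt_semigroup_size_le L (n ^ n.-1 + n - 1).
Proof.
move=> le_refl le_anti le_trans le_nil action_homo n_ge3.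
pose R := [set f | `[< exists2 x, x != [::] & action x = f >]].
have card_R : #|R| <= n ^ n.-1 + n - 1.
  have sub_R : R \subset monotone_maps le.
    apply/subsetP => f; rewrite !inE => /asboolP[x _ <-].
    by apply/forallP => i; apply/forallP => j; apply/implyP/action_homo.
  have := card_monotone_maps le_refl le_anti le_trans le_nil; rewrite card_ord.
  by move=> /(_ n_ge3); apply: leq_trans (subset_leq_card sub_R).
have [|reps [size_reps cover]] :=
  @exists_witness_seq _ _ (fun f x => x != [::] /\ action x = f) (enum R).
  by move=> f; rewrite mem_enum inE => /asboolP[x x_nil <-]; exists x.
exists [seq x <- reps | x != [::]]; split; [|split].
- by rewrite size_filter (leq_trans (count_size _ _)) // size_reps -cardE.
- exact: filter_all.
- move=> x x_nil; have [|y y_reps [y_nil eq_xy]] := cover (action x).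
    by rewrite mem_enum inE; apply/asboolP; exists x.
  by exists y; [rewrite mem_filter y_nil | apply: action_synt_eq; rewrite eq_xy].
Qed.

Lemma left_ideal_synt_semigroup_size_le :
  left_ideal L -> 3 <= n -> synt_semigroup_size_le L (n ^ n.-1 + n - 1).
Proof.
case=> _ ideal; apply: (synt_semigroup_size_le_monotone (le := state_sub)).
- exact: state_sub_refl.
- exact: state_sub_anti.
- exact: state_sub_trans.
- by move=> i; apply/asboolP => w /state_of_nil; apply: ideal.
- exact: state_sub_action.
Qed.

Lemma suffix_closed_synt_semigroup_size_le :
  suffix_closed L -> 3 <= n -> synt_semigroup_size_le L (n ^ n.-1 + n - 1).
Proof.
move=> closed; apply: (synt_semigroup_size_le_monotone (le := fun i j => state_sub j i)).
- by move=> i; apply: state_sub_refl.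
- by move=> i j sub_ij; apply: state_sub_anti; rewrite andbC.
- by move=> j i k sub_ji sub_kj; apply: state_sub_trans sub_kj sub_ji.
- by move=> i; apply/asboolP => w /closed/state_of_nil.
- by move=> x i j; apply: state_sub_action.
Qed.
End QuotientStates.

Theorem lemma5 (T : finType) (L : lang T) (n : nat) :
  3 <= n ->
  (left_ideal L \/ suffix_closed L) ->
  has_n_quotients L n ->
  synt_semigroup_size_le L (n ^ n.-1 + n - 1).
Proof.
move=> n_ge3 ideal_or_closed [ws [_ [ws_inj ws_cover]]].
have n_gt0 : 0 < n by apply: leq_trans n_ge3.
case: ideal_or_closed => [ideal|closed].
- exact: (left_ideal_synt_semigroup_size_le n_gt0 ws_inj ws_cover ideal).
- exact: (suffix_closed_synt_semigroup_size_le n_gt0 ws_inj ws_cover closed).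
Qed.
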